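(* Let $D,D'$ be minimal abstract storage devices. Then $D\equiv D'$ if and only if there exist bijections $\phi:\mathcal{S}_D\to\mathcal{S}_{D'}$ and $\alpha:\mathcal{P}_D\to\mathcal{P}_{D'}$ such that $\pi=\alpha(\pi)\circ\phi$ for all $\pi\in\mathcal{P}_D$ (equivalently, $\pi'=\alpha^{-1}(\pi')\circ\phi^{-1}$ for all $\pi'\in\mathcal{P}_{D'}$).
   Context: An abstract storage device (ASD) is a pair $D=(\mathcal{S}_D,\mathcal{P}_D)$, $\mathcal{S}_D$ a finite set and $\mathcal{P}_D$ a finite family of partitions of $\mathcal{S}_D$. For a partition $\pi$ of $\mathcal{S}'$ and $\phi:\mathcal{S}\to\mathcal{S}'$, $\pi\circ\phi$ is the partition of $\mathcal{S}$ with $x,y$ in the same block iff $\phi(x),\phi(y)$ are in the same block of $\pi$; $\pi\preceq\rho$ means every block of $\pi$ lies in a block of $\rho$. $D\le D'$ means there exist $\phi:\mathcal{S}_D\to\mathcal{S}_{D'}$, $\alpha:\mathcal{P}_D\to\mathcal{P}_{D'}$ with $\alpha(\pi)\circ\phi\preceq\pi$ for all $\pi\in\mathcal{P}_D$; $D\equiv D'$ means $D\le D'$ and $D'\le D$. $D$ is minimal if there is no $E\equiv D$ with $|\mathcal{S}_E|<|\mathcal{S}_D|$ and no $E\equiv D$ with $|\mathcal{P}_E|<|\mathcal{P}_D|$. *)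

From mathcomp Require Import all_boot.
Set Implicit Arguments. Unset Strict Implicit. Unset Printing Implicit Defensive.

Record ASD := MkASD {
  st : finType;
  parts : {set {set {set st}}};
  parts_ok : forall p, p \in parts -> partition p [set: st]
}.

(* pi \o phi : x, y in the same block iff phi x, phi y in the same block of pi. *)
Definition comp_part (S S' : finType) (pi : {set {set S'}}) (phi : S -> S')
  : {set {set S}} :=
  preim_partition (fun x => pblock pi (phi x)) [set: S].

Definition refines (S : finType) (pi rho : {set {set S}}) : Prop :=
  forall B, B \in pi -> exists2 C, C \in rho & B \subset C.

Definition asd_le (D D' : ASD) : Prop :=
  exists (phi : st D -> st D') (alpha : {set {set st D}} -> {set {set st D'}}),
    forall pi, pi \in parts D ->
      alpha pi \in parts D' /\ refines (comp_part (alpha pi) phi) pi.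

Definition asd_equiv (D D' : ASD) : Prop := asd_le D D' /\ asd_le D' D.

Definition asd_minimal (D : ASD) : Prop :=
  ~ (exists E : ASD, asd_equiv E D /\ #|st E| < #|st D|) /\
  ~ (exists E : ASD, asd_equiv E D /\ #|parts E| < #|parts D|).

(** A reduction [D <= D'] that is not a bijection on states (or on
    partitions) lets one replace [D'] by the sub-device spanned by its image,
    which is still equivalent to [D'] and strictly smaller; so between minimal
    equivalent devices both maps are bijections.  It remains to see that each
    pulled-back partition [alpha pi \o phi] equals [pi] and not merely refines
    it.  Count, for every partition, the pairs of states lying in a common
    block: refinement can only lower this count, and a bijection [phi] does
    not change it.  Summing over all partitions and using the reductions in
    both directions, the total cannot decrease, so every inequality is an
    equality, and a refinement with as many related pairs is an equality. *)

From mathcomp Require Import all_boot.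
Set Implicit Arguments. Unset Strict Implicit. Unset Printing Implicit Defensive.

Section Partitions.
Variable S : finType.
Implicit Types P Q : {set {set S}}.

Definition same_block P x y := y \in pblock P x.

Lemma same_blockE P x y : partition P [set: S] ->
  same_block P x y = (pblock P x == pblock P y).
Proof. by case/and3P=> /eqP coverP trivP _; rewrite /same_block eq_pblock ?coverP. Qed.

Lemma refinesP P Q : partition P [set: S] -> partition Q [set: S] ->
  refines P Q <-> (forall x y, same_block P x y -> same_block Q x y).
Proof.
move=> /and3P[/eqP coverP trivP nzP] /and3P[/eqP coverQ trivQ _].
have in_cover R x : cover R = [set: S] -> x \in cover R by move->; rewrite inE.
split=> [PQ x y | PQ B BP].
  have [C CQ BC] := PQ _ (pblock_mem (in_cover _ x coverP)).
  have xC : x \in C by apply: (subsetP BC); rewrite mem_pblock in_cover.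
  by rewrite /same_block (def_pblock trivQ CQ xC) => /(subsetP BC).
have /set0Pn[x Bx] : B != set0 by apply: contraNneq nzP => <-.
exists (pblock Q x); first exact: pblock_mem (in_cover _ x coverQ).
by apply/subsetP=> y yB; apply: PQ; rewrite /same_block (def_pblock trivP BP Bx).
Qed.

Definition block_pairs P := [set xy : S * S | same_block P xy.1 xy.2].

Lemma block_pairs_inj P Q : partition P [set: S] -> partition Q [set: S] ->
  block_pairs P = block_pairs Q -> P = Q.
Proof.
move=> P_part Q_part /setP eqPQ.
rewrite -(equivalence_partition_pblock P_part) -(equivalence_partition_pblock Q_part).
apply: eq_imset => x; apply/setP => y; have := eqPQ (x, y).
by rewrite !inE.
Qed.

End Partitions.

Lemma comp_part_partition (S S' : finType) (pi : {set {set S'}}) (phi : S -> S') :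
  partition (comp_part pi phi) [set: S].
Proof. exact: preim_partitionP. Qed.

Lemma same_block_comp (S S' : finType) (pi : {set {set S'}}) (phi : S -> S') x y :
  partition pi [set: S'] ->
  same_block (comp_part pi phi) x y = same_block pi (phi x) (phi y).
Proof.
move=> pi_part; rewrite /same_block pblock_equivalence_partition ?inE //.
  by rewrite -same_blockE.
by split=> // /eqP->.
Qed.

Lemma card_block_pairs_comp (S S' : finType) (pi : {set {set S'}}) (phi : S -> S') :
  partition pi [set: S'] -> bijective phi ->
  #|block_pairs (comp_part pi phi)| = #|block_pairs pi|.
Proof.
move=> pi_part [psi phiK psiK]; pose phi2 (xy : S * S) := (phi xy.1, phi xy.2).
have -> : block_pairs (comp_part pi phi) = phi2 @^-1: block_pairs pi.
  by apply/setP => -[x y]; rewrite !inE same_block_comp.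
rewrite on_card_preimset //; apply: onW_bij.
by exists (fun xy : S' * S' => (psi xy.1, psi xy.2)) => -[x y]; rewrite /phi2 /= ?phiK ?psiK.
Qed.

Section Reductions.
Implicit Types D E : ASD.

Definition reduction D E (phi : st D -> st E) (alpha : {set {set st D}} -> {set {set st E}}) :=
  forall pi, pi \in parts D -> alpha pi \in parts E /\
    forall x y, same_block (alpha pi) (phi x) (phi y) -> same_block pi x y.

Lemma asd_leP D E : asd_le D E <-> exists phi alpha, @reduction D E phi alpha.
Proof.
split=> -[phi [alpha red]]; exists phi, alpha => pi piD;
  have [alphaE alphaR] := red _ piD; split=> //.
  move=> x y; rewrite -same_block_comp ?parts_ok //.
  by apply/refinesP: x y; rewrite ?comp_part_partition ?parts_ok.
apply/refinesP; rewrite ?comp_part_partition ?parts_ok // => x y.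
by rewrite same_block_comp ?parts_ok //; apply: alphaR.
Qed.

Lemma reduction_comp D E F phi alpha psi beta :
  @reduction D E phi alpha -> @reduction E F psi beta ->
  reduction (psi \o phi) (beta \o alpha).
Proof.
move=> redDE redEF pi piD; have [alphaE alphaR] := redDE _ piD.
by have [betaF betaR] := redEF _ alphaE; split=> // x y /betaR /alphaR.
Qed.

Lemma asd_le_trans D E F : asd_le D E -> asd_le E F -> asd_le D F.
Proof.
move=> /asd_leP[phi [alpha redDE]] /asd_leP[psi [beta redEF]].
by apply/asd_leP; exists (psi \o phi), (beta \o alpha); apply: reduction_comp.
Qed.

Definition sub_states D (A : {set st D}) : finType := {x : st D | x \in A}.

Lemma asd_sub_states_ok D (A : {set st D}) p :
  p \in [set comp_part pi (val : sub_states A -> st D) | pi in parts D] ->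
  partition p [set: sub_states A].
Proof. by case/imsetP=> pi _ ->; apply: comp_part_partition. Qed.

Definition asd_sub_states D (A : {set st D}) : ASD := MkASD (@asd_sub_states_ok D A).

Lemma asd_sub_states_le D (A : {set st D}) : asd_le (asd_sub_states A) D.
Proof.
exists val, (fun s => odflt set0 [pick pi in parts D | comp_part pi val == s]).
move=> s /imsetP[pi0 pi0D ->].
case: pickP => [pi /andP[piD /eqP ->] | /(_ pi0)]; last by rewrite pi0D eqxx.
by split=> // B BP; exists B.
Qed.

Lemma asd_le_sub_states D E phi alpha : @reduction D E phi alpha ->
  asd_le D (asd_sub_states (phi @: [set: st D])).
Proof.
move=> red; apply/asd_leP.
exists (fun x => exist _ (phi x) (imset_f phi (in_setT x)) : sub_states _).
exists (fun pi => comp_part (alpha pi) val) => pi piD; have [alphaE alphaR] := red _ piD.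
split=> [|x y]; first exact: imset_f.
by rewrite same_block_comp ?parts_ok //; apply: alphaR.
Qed.

Lemma asd_sub_parts_ok D (P : {set {set {set st D}}}) p :
  p \in P :&: parts D -> partition p [set: st D].
Proof. by case/setIP=> _; apply: parts_ok. Qed.

Definition asd_sub_parts D (P : {set {set {set st D}}}) : ASD :=
  MkASD (@asd_sub_parts_ok D P).

Lemma asd_sub_parts_le D (P : {set {set {set st D}}}) : asd_le (asd_sub_parts P) D.
Proof. by apply/asd_leP; exists id, id => pi /setIP[]. Qed.

Lemma asd_le_sub_parts D E phi alpha : @reduction D E phi alpha ->
  asd_le D (asd_sub_parts (alpha @: parts D)).
Proof.
move=> red; apply/asd_leP; exists phi, alpha => pi piD.
by have [alphaE alphaR] := red _ piD; split; rewrite // inE imset_f.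
Qed.

Lemma minimal_equiv_card D E : asd_minimal D -> asd_equiv E D ->
  #|st D| <= #|st E| /\ #|parts D| <= #|parts E|.
Proof.
by case=> minS minP equivED; split; rewrite leqNgt; apply/negP => lt;
  [apply: minS | apply: minP]; exists E.
Qed.

Lemma minimal_card_image_states D E phi alpha :
  asd_minimal E -> @reduction D E phi alpha -> asd_le E D ->
  #|st E| <= #|phi @: [set: st D]|.
Proof.
move=> minE red leED; have le_sub := asd_sub_states_le (phi @: [set: st D]).
have [+ _] := minimal_equiv_card minE
  (conj le_sub (asd_le_trans leED (asd_le_sub_states red))).
by rewrite /= card_sig.
Qed.

Lemma minimal_card_image_parts D E phi alpha :
  asd_minimal E -> @reduction D E phi alpha -> asd_le E D ->
  #|parts E| <= #|alpha @: parts D|.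
Proof.
move=> minE red leED; have le_sub := asd_sub_parts_le (alpha @: parts D).
have [_] := minimal_equiv_card minE
  (conj le_sub (asd_le_trans leED (asd_le_sub_parts red))).
by move/leq_trans; apply; rewrite subset_leq_card ?subsetIl.
Qed.

Lemma minimal_reduction_bij D E phi alpha :
  asd_minimal D -> asd_minimal E -> @reduction D E phi alpha -> asd_le E D ->
  [/\ bijective phi, {in parts D &, injective alpha} & alpha @: parts D = parts E].
Proof.
move=> minD minE red leED; have leDE : asd_le D E by apply/asd_leP; exists phi, alpha.
have [cardS cardP] := minimal_equiv_card minD (conj leED leDE).
have card_img_st := minimal_card_image_states minE red leED.
have card_img_parts := minimal_card_image_parts minE red leED.
have phi_inj : injective phi.
  have /imset_injP phi_inj : #|phi @: [set: st D]| == #|[set: st D]|.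
    by rewrite eqn_leq leq_imset_card cardsT (leq_trans cardS card_img_st).
  by move=> x y; apply: phi_inj; rewrite inE.
have alpha_img : alpha @: parts D \subset parts E.
  by apply/subsetP=> _ /imsetP[pi piD ->]; case: (red _ piD).
split.
- apply: inj_card_bij phi_inj _.
  by rewrite (leq_trans card_img_st) // -cardsT leq_imset_card.
- by apply/imset_injP; rewrite eqn_leq leq_imset_card (leq_trans cardP card_img_parts).
- by apply/eqP; rewrite eqEcard alpha_img card_img_parts.
Qed.

Lemma reduction_block_pairs_sub D E phi alpha pi : @reduction D E phi alpha ->
  pi \in parts D -> block_pairs (comp_part (alpha pi) phi) \subset block_pairs pi.
Proof.
move=> red piD; have [alphaE alphaR] := red _ piD.
by apply/subsetP=> -[x y]; rewrite !inE same_block_comp ?parts_ok //; apply: alphaR.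
Qed.

Lemma reduction_card_block_pairs D E phi alpha pi :
  bijective phi -> @reduction D E phi alpha -> pi \in parts D ->
  #|block_pairs (alpha pi)| <= #|block_pairs pi|.
Proof.
move=> phi_bij red piD; have [alphaE _] := red _ piD.
rewrite -(card_block_pairs_comp (parts_ok alphaE) phi_bij).
exact: subset_leq_card (reduction_block_pairs_sub red piD).
Qed.

Lemma reduction_comp_part_eq D E phi alpha pi :
  bijective phi -> @reduction D E phi alpha -> pi \in parts D ->
  #|block_pairs pi| <= #|block_pairs (alpha pi)| -> pi = comp_part (alpha pi) phi.
Proof.
move=> phi_bij red piD le_pairs; have [alphaE _] := red _ piD.
apply: block_pairs_inj; rewrite ?comp_part_partition ?parts_ok //.
apply/eqP; rewrite eq_sym eqEcard reduction_block_pairs_sub //=.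
by rewrite (card_block_pairs_comp (parts_ok alphaE) phi_bij).
Qed.

Lemma mutual_reductions_card_block_pairs D E phi alpha psi beta :
  bijective phi -> @reduction D E phi alpha ->
  {in parts D &, injective alpha} -> alpha @: parts D = parts E ->
  bijective psi -> @reduction E D psi beta ->
  {in parts E &, injective beta} -> beta @: parts E = parts D ->
  forall pi, pi \in parts D -> #|block_pairs pi| <= #|block_pairs (alpha pi)|.
Proof.
move=> phi_bij redDE alpha_inj alpha_img psi_bij redED beta_inj beta_img.
have le_alpha pi : pi \in parts D -> #|block_pairs (alpha pi)| <= #|block_pairs pi|.
  exact: reduction_card_block_pairs phi_bij redDE.
have total : \sum_(pi in parts D) #|block_pairs pi| <=
             \sum_(pi in parts D) #|block_pairs (alpha pi)|.
  rewrite -{1}beta_img big_imset //=.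
  rewrite -(big_imset (fun pi => #|block_pairs pi|) alpha_inj) /= alpha_img.
  by apply: leq_sum => pi' /(reduction_card_block_pairs psi_bij redED).
have [le_sum] := leqif_sum (fun pi piD => leqif_eq (le_alpha pi piD)).
rewrite eqn_leq le_sum total => /esym/forall_inP eq_pairs pi piD.
by rewrite (eqP (eq_pairs pi piD)).
Qed.

Lemma asd_equiv_of_iso D E phi alpha :
  bijective phi -> (forall pi, pi \in parts D -> alpha pi \in parts E) ->
  (forall pi', pi' \in parts E -> exists2 pi, pi \in parts D & alpha pi = pi') ->
  (forall pi, pi \in parts D -> pi = comp_part (alpha pi) phi) ->
  asd_equiv D E.
Proof.
move=> [psi phiK psiK] alphaE alpha_onto alpha_comp; split; apply/asd_leP.
  exists phi, alpha => pi piD; split=> [|x y]; first exact: alphaE.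
  by rewrite {2}(alpha_comp _ piD) same_block_comp ?parts_ok ?alphaE.
exists psi, (fun pi' => odflt set0 [pick pi in parts D | alpha pi == pi']).
move=> pi' pi'E; have [pi0 pi0D alpha_pi0] := alpha_onto _ pi'E.
case: pickP => [pi /andP[piD /eqP <-] | /(_ pi0)]; last by rewrite pi0D alpha_pi0 eqxx.
split=> // x y; rewrite {1}(alpha_comp _ piD) same_block_comp ?parts_ok ?alphaE //.
by rewrite !psiK.
Qed.

End Reductions.

Theorem proposition2 (D D' : ASD) :
  asd_minimal D -> asd_minimal D' ->
  (asd_equiv D D' <->
   exists (phi : st D -> st D') (alpha : {set {set st D}} -> {set {set st D'}}),
     [/\ bijective phi,
         (forall pi, pi \in parts D -> alpha pi \in parts D'),
         {in parts D &, injective alpha},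
         (forall pi', pi' \in parts D' -> exists2 pi, pi \in parts D & alpha pi = pi')
       & (forall pi, pi \in parts D -> pi = comp_part (alpha pi) phi)]).
Proof.
move=> minD minD'; split=> [[leDD' leD'D] | [phi [alpha [phi_bij alphaE _ onto comp]]]];
  last exact: asd_equiv_of_iso phi_bij alphaE onto comp.
have /asd_leP[phi [alpha redDD']] := leDD'.
have /asd_leP[psi [beta redD'D]] := leD'D.
have [phi_bij alpha_inj alpha_img] := minimal_reduction_bij minD minD' redDD' leD'D.
have [psi_bij beta_inj beta_img] := minimal_reduction_bij minD' minD redD'D leDD'.
exists phi, alpha; split=> //.
- by move=> pi /redDD'[].
- by move=> pi'; rewrite -alpha_img => /imsetP[pi piD ->]; exists pi.
- move=> pi piD; apply: (reduction_comp_part_eq phi_bij redDD' piD).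
  exact: (mutual_reductions_card_block_pairs phi_bij redDD' alpha_inj alpha_img
            psi_bij redD'D beta_inj beta_img).
Qed.
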